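(* For a graphical sequence $\pi$ of length $n$ define $h(\pi)=g(\overline{\pi})$. Then: (i) every realization $G$ of $\pi$ satisfies $\chi(G)\ge\omega(G)\ge h(\pi)$; (ii) $h$ is monotone increasing: if $\pi\le\pi'$ termwise (both graphical of length $n$) then $h(\pi)\le h(\pi')$; (iii) there is a graphical sequence $\pi'\ge\pi$ (termwise) of length $n$ having a realization that is a complete $h(\pi)$-partite graph, so that $\omega$ and $\chi$ of this realization both equal $h(\pi)$.
   Context: Graphs are finite and simple; a graphical sequence is a nondecreasing integer sequence that is the degree sequence of some graph (a realization). For $\pi=(d_1\le\cdots\le d_n)$, $\overline{\pi}=((n-1)-d_n\le\cdots\le(n-1)-d_1)$ is the complementary sequence. For a graphical sequence $(e_1\le\cdots\le e_n)$ define $f(1)=e_1$ with index $j_1=1$; if $f(i)=e_{j_i}$ is finite and $j_i+f(i)+1\le n$ set $j_{i+1}=j_i+f(i)+1$, $f(i+1)=e_{j_{i+1}}$, otherwise $f(i+1)=\infty$; once $\infty$, it stays $\infty$. Let $g$ of that sequence be $\max\{i\in\mathbb{Z}^+: f(i)<\infty\}$. It is known (Murphy) that every realization of a graphical sequence $\sigma$ has independence number at least $g(\sigma)$. $\omega$ is clique number and $\chi$ chromatic number. *)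

From mathcomp Require Import all_boot.
Set Implicit Arguments. Unset Strict Implicit. Unset Printing Implicit Defensive.

Definition simple_graph (n : nat) (G : rel 'I_n) : Prop :=
  irreflexive G /\ symmetric G.

Definition deg (n : nat) (G : rel 'I_n) (x : 'I_n) : nat := #|[set y | G x y]|.

Definition degseq (n : nat) (G : rel 'I_n) : seq nat :=
  sort leq [seq deg G x | x <- enum 'I_n].

Definition realizes (n : nat) (G : rel 'I_n) (pi : seq nat) : Prop :=
  simple_graph G /\ degseq G = pi.

Definition graphical (pi : seq nat) : Prop :=
  exists G : rel 'I_(size pi), realizes G pi.

Definition compl_seq (pi : seq nat) : seq nat :=
  rev [seq (size pi).-1 - d | d <- pi].

(* Murphy's g, 0-based positions: p_1 = 0, f(i) = e_{p_i},
   p_{i+1} = p_i + f(i) + 1 as long as p_{i+1} < n. g counts the finite f(i).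
   Fuel = size s suffices as positions strictly increase. *)
Fixpoint gcount (s : seq nat) (fuel p : nat) : nat :=
  match fuel with
  | 0 => 0
  | k.+1 => if p < size s then (gcount s k (p + nth 0 s p).+1).+1 else 0
  end.

Definition g (s : seq nat) : nat := gcount s (size s) 0.

Definition h (pi : seq nat) : nat := g (compl_seq pi).

Definition is_clique (n : nat) (G : rel 'I_n) (A : {set 'I_n}) : bool :=
  [forall x in A, forall y in A, (x != y) ==> G x y].

Definition omega (n : nat) (G : rel 'I_n) : nat :=
  \max_(A : {set 'I_n} | is_clique G A) #|A|.

(* chromatic number: least k admitting a proper k-colouring (k = n always works) *)
Definition colorable (n : nat) (G : rel 'I_n) (k : nat) : bool :=
  [exists f : {ffun 'I_n -> 'I_k}, [forall x, forall y, G x y ==> (f x != f y)]].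

Definition chi (n : nat) (G : rel 'I_n) : nat :=
  \big[minn/n]_(k < n.+1 | colorable G k) k.

Definition complete_multipartite (n : nat) (G : rel 'I_n) (k : nat) : Prop :=
  exists p : 'I_n -> 'I_k,
    (forall c : 'I_k, exists x, p x = c) /\ (forall x y, G x y = (p x != p y)).

From HB Require Import structures.
From mathcomp Require Import all_boot zify.
Set Implicit Arguments. Unset Strict Implicit. Unset Printing Implicit Defensive.

(* Let e be the complementary sequence, which lists n-1-d over the degrees d in
   decreasing order, and let p_1 = 0, p_(i+1) = p_i + e_(p_i) + 1 be Murphy's
   walk, which takes h(pi) steps.
   (i) Greedy clique: before step i at most p_i vertices have been discarded, so
   some candidate has degree at least the (p_i+1)-st largest one; adding it and
   keeping only its neighbours discards at most e_(p_i) + 1 more vertices.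
   (ii) Raising pi lowers e, so the walk takes shorter strides and more steps.
   (iii) Cut the positions into the h(pi) intervals [p_i, p_(i+1)) and join the
   vertices lying in different intervals.  A vertex at position j of the interval
   starting at q misses at most e_q + 1 <= e_j + 1 vertices, so its degree
   dominates its entry of pi; counting then shows that the sorted degree
   sequence dominates pi termwise. *)

Lemma card_set_count (T : finType) (P : pred T) :
  #|[set x | P x]| = count P (enum T).
Proof.
rewrite cardsE cardE /enum_mem size_filter count_filter.
by apply: eq_count => x; rewrite !inE andbT.
Qed.

Lemma card_leq_interval n (A : {set 'I_n}) (lo m : nat) :
  (forall x : 'I_n, x \in A -> lo <= x < lo + m) -> #|A| <= m.
Proof.
move=> Aint; rewrite cardE -(size_map val) -[m](size_iota lo).
apply: uniq_leq_size; first by rewrite map_inj_uniq ?enum_uniq //; exact: val_inj.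
by move=> y /mapP [x]; rewrite mem_enum => xA ->; rewrite mem_iota; exact: Aint.
Qed.

Lemma all2_nthP (T : Type) (x0 : T) (r : rel T) (s t : seq T) :
  size s = size t ->
  reflect (forall i, i < size s -> r (nth x0 s i) (nth x0 t i)) (all2 r s t).
Proof.
move=> st; rewrite all2E st eqxx /=.
apply: (iffP (all_nthP (x0, x0))); rewrite size_zip st minnn => rst i it.
  by have := rst i it; rewrite nth_zip.
by rewrite nth_zip //; exact: rst.
Qed.

Lemma leq_nth_sorted (s : seq nat) i j : sorted leq s ->
  i <= j -> j < size s -> nth 0 s i <= nth 0 s j.
Proof.
move=> ss ij js; apply: (sorted_leq_nth leq_trans leqnn 0 ss) => //.
by rewrite inE; exact: leq_ltn_trans js.
Qed.

Section SortedCount.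

Variable s : seq nat.
Hypothesis s_sorted : sorted leq s.

Lemma count_geq_nth q : q < size s -> size s - q <= count (leq (nth 0 s q)) s.
Proof.
move=> qs; set c := nth 0 s q.
rewrite -[s in _ - _ <= count _ s](cat_take_drop q s) count_cat.
have -> : count (leq c) (drop q s) = size (drop q s).
  apply/eqP; rewrite -all_count; apply/(all_nthP 0) => i; rewrite size_drop => iq.
  by rewrite nth_drop (leq_nth_sorted s_sorted); lia.
by rewrite size_drop; have := count_size (leq c) (take q s); lia.
Qed.

Lemma nth_geq_of_count k c :
  k < size s -> size s - k <= count (leq c) s -> c <= nth 0 s k.
Proof.
move=> ks cnt; rewrite leqNgt; apply/negP => ltk; move: cnt.
have none_below : count (leq c) (take k.+1 s) = 0.
  apply/eqP; rewrite -leqn0 leqNgt -has_count; apply/negP => /(has_nthP 0) [i].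
  rewrite size_take => ik; have ik1 : i <= k by move: ik; case: ifP; lia.
  rewrite nth_take /= ?ltnS // => cle.
  by have := leq_nth_sorted s_sorted ik1 ks; lia.
rewrite -[s in count _ s](cat_take_drop k.+1 s) count_cat none_below add0n.
by have := count_size (leq c) (drop k.+1 s); rewrite size_drop; lia.
Qed.

End SortedCount.

Lemma all2_leq_sorted (s t : seq nat) :
  sorted leq s -> sorted leq t -> size s = size t ->
  (forall c, count (leq c) s <= count (leq c) t) -> all2 leq s t.
Proof.
move=> ss st sz cnt; apply/(all2_nthP 0 _ sz) => i ilt.
apply: nth_geq_of_count; rewrite -?sz //.
exact: leq_trans (count_geq_nth ss ilt) (cnt _).
Qed.

Section Degrees.

Variables (n : nat) (G : rel 'I_n).

Lemma deg_leq_pred : irreflexive G -> forall x, deg G x <= n.-1.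
Proof.
move=> irrG x; rewrite /deg -[n in n.-1]card_ord -(cardsC1 x); apply: subset_leq_card.
by apply/subsetP => y; rewrite !inE; apply: contraTN => /eqP ->; rewrite irrG.
Qed.

Lemma size_degseq : size (degseq G) = n.
Proof. by rewrite /degseq size_sort size_map size_enum_ord. Qed.

Lemma sorted_degseq : sorted leq (degseq G).
Proof. exact: (sort_sorted leq_total). Qed.

Lemma count_degseq (P : pred nat) : count P (degseq G) = #|[set x | P (deg G x)]|.
Proof. by rewrite /degseq (permP (permEl (perm_sort leq _))) count_map card_set_count. Qed.

Lemma nth_degseq_leq : irreflexive G -> forall i, nth 0 (degseq G) i <= n.-1.
Proof.
move=> irrG i; case: (ltnP i (size (degseq G))) => [i_lt | i_ge]; last by rewrite nth_default.
by move: (mem_nth 0 i_lt); rewrite mem_sort => /mapP [x _ ->]; exact: deg_leq_pred.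
Qed.

End Degrees.

Lemma size_compl_seq pi : size (compl_seq pi) = size pi.
Proof. by rewrite size_rev size_map. Qed.

Lemma nth_compl_seq pi j : j < size pi ->
  nth 0 (compl_seq pi) j = (size pi).-1 - nth 0 pi (size pi - j.+1).
Proof. by move=> js; rewrite nth_rev size_map // (nth_map 0) //; lia. Qed.

Lemma sorted_compl_seq pi : sorted leq pi -> sorted leq (compl_seq pi).
Proof.
move=> spi; rewrite rev_sorted sorted_map.
by apply: sub_sorted spi => a b ab /=; exact: leq_sub2l.
Qed.

Lemma all2_leq_compl_seq pi pi' : size pi' = size pi ->
  all2 leq pi pi' -> all2 leq (compl_seq pi') (compl_seq pi).
Proof.
move=> sz /(all2_nthP 0 _ (esym sz)) le_pi.
apply/(all2_nthP 0); rewrite !size_compl_seq // => j js.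
by rewrite !nth_compl_seq -?sz // leq_sub2l // le_pi; lia.
Qed.

(* Lets [big_rem_AC] extract one term of the minimum defining [chi], whose
   initial value [n] is not a unit for [minn]. *)
HB.instance Definition _ := SemiGroup.isComLaw.Build nat minn minnA minnC.

Section CliquesColourings.

Variables (n : nat) (G : rel 'I_n).

Lemma is_clique_setU1 (A : {set 'I_n}) v : symmetric G -> is_clique G A ->
  (forall a, a \in A -> G v a) -> is_clique G (v |: A).
Proof.
move=> symG clA adj; apply/forallP => x; apply/implyP => xA.
apply/forallP => y; apply/implyP => yA; apply/implyP.
move: xA yA; rewrite !inE => /predU1P [-> | xA] /predU1P [-> | yA].
- by rewrite eqxx.
- by move=> _; exact: adj.
- by rewrite symG adj.
- by move/forallP/(_ x)/implyP/(_ xA)/forallP/(_ y)/implyP/(_ yA)/implyP: clA.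
Qed.

Lemma leq_card_omega (A : {set 'I_n}) : is_clique G A -> #|A| <= omega G.
Proof. by move=> clA; exact: (leq_bigmax_cond (F := fun B : {set _} => #|B|) A clA). Qed.

Lemma card_clique_leq_colorable (A : {set 'I_n}) k :
  is_clique G A -> colorable G k -> #|A| <= k.
Proof.
move=> clA /existsP [f /forallP proper].
have f_inj : {in A &, injective f}.
  move=> x y xA yA fxy; apply/eqP; apply: contraT => xy.
  move/forallP/(_ x)/implyP/(_ xA)/forallP/(_ y)/implyP/(_ yA)/implyP/(_ xy): clA => Gxy.
  by move/forallP/(_ y)/implyP/(_ Gxy): (proper x); rewrite fxy eqxx.
by rewrite -(card_in_imset f_inj); apply: leq_trans (max_card _) _; rewrite card_ord.
Qed.

Lemma omega_leq_chi : omega G <= chi G.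
Proof.
apply: (big_ind (fun c => omega G <= c)) => [||c colc].
- by apply/bigmax_leqP => A _; apply: leq_trans (max_card _) _; rewrite card_ord.
- by move=> a b oa ob; rewrite leq_min oa ob.
- by apply/bigmax_leqP => A clA; exact: card_clique_leq_colorable clA colc.
Qed.

Lemma chi_leq_colorable k : k <= n -> colorable G k -> chi G <= k.
Proof.
move=> kn colk; rewrite /chi (big_rem_AC _ _ _ _ (mem_index_enum (Ordinal (kn : k < n.+1)))).
by rewrite colk geq_minl.
Qed.

End CliquesColourings.

Section CompleteMultipartite.

Variables (n k : nat) (G : rel 'I_n) (part : 'I_n -> 'I_k) (rep : 'I_k -> 'I_n).
Hypothesis G_part : forall x y, G x y = (part x != part y).
Hypothesis rep_part : cancel rep part.

Let transversal := [set rep c | c : 'I_k].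

Lemma card_transversal : #|transversal| = k.
Proof. by rewrite card_imset ?cardsT ?card_ord //; exact: can_inj rep_part. Qed.

Lemma is_clique_transversal : is_clique G transversal.
Proof.
apply/forallP => x; apply/implyP => /imsetP [c _ ->]; apply/forallP => y.
apply/implyP => /imsetP [d _ ->]; apply/implyP => rcd.
by rewrite G_part !rep_part; apply: contraNneq rcd => ->.
Qed.

Lemma colorable_parts : colorable G k.
Proof.
apply/existsP; exists [ffun x => part x].
by apply/forallP => x; apply/forallP => y; rewrite !ffunE G_part; apply/implyP.
Qed.

Lemma omega_chi_parts : omega G = k /\ chi G = k.
Proof.
have k_omega : k <= omega G by rewrite -card_transversal leq_card_omega ?is_clique_transversal.
have kn : k <= n.
  by rewrite -card_transversal; apply: leq_trans (max_card _) _; rewrite card_ord.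
have := omega_leq_chi G; have := chi_leq_colorable kn colorable_parts; lia.
Qed.

End CompleteMultipartite.

Lemma omega_chi_complete_multipartite n (G : rel 'I_n) k :
  complete_multipartite G k -> omega G = k /\ chi G = k.
Proof.
case=> part [part_surj G_part].
have [rep rep_part] := fin_all_exists part_surj.
exact: omega_chi_parts G_part rep_part.
Qed.

Section GreedyClique.

Variables (n : nat) (G : rel 'I_n).
Hypothesis G_simple : simple_graph G.

Let ds := degseq G.

Lemma exists_vertex_deg_geq (W : {set 'I_n}) p : #|~: W| <= p -> p < n ->
  exists2 v, v \in W & nth 0 ds (n - p.+1) <= deg G v.
Proof.
move=> Wp pn; set c := nth 0 ds (n - p.+1).
apply/exists_inP; apply: contraT => /exists_inPn small.
have : #|[set x | c <= deg G x]| <= p.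
  apply: leq_trans Wp; apply: subset_leq_card; apply/subsetP => x.
  by rewrite !inE; apply: contraTN => /small.
have ds_pn : n - p.+1 < size ds by rewrite size_degseq; lia.
have := count_geq_nth (sorted_degseq G) ds_pn.
by rewrite count_degseq size_degseq -/ds -/c; lia.
Qed.

Lemma card_setC_neighbours (W : {set 'I_n}) v :
  #|~: (W :&: [set y | G v y])| <= #|~: W| + (n - deg G v).
Proof.
rewrite setCI cardsU; apply: leq_trans (leq_subr _ _) _; rewrite leq_add2l.
by rewrite cardsCs setCK card_ord.
Qed.

Lemma exists_clique_gcount fuel p (W : {set 'I_n}) : #|~: W| <= p ->
  exists A : {set 'I_n},
    [/\ A \subset W, is_clique G A & gcount (compl_seq ds) fuel p <= #|A|].
Proof.
have [irrG symG] := G_simple.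
have empty_clique : is_clique G set0 by apply/forallP => x; rewrite inE.
elim: fuel p W => [|fuel IH] p W Wp; first by exists set0; rewrite sub0set.
rewrite /= size_compl_seq size_degseq.
case: (ltnP p n) => pn; last by exists set0; rewrite sub0set.
have [v vW cv] := exists_vertex_deg_geq Wp pn.
have ep : nth 0 (compl_seq ds) p = n.-1 - nth 0 ds (n - p.+1).
  by rewrite nth_compl_seq size_degseq.
have [|A [AW clA cardA]] := IH (p + nth 0 (compl_seq ds) p).+1 (W :&: [set y | G v y]).
  have := card_setC_neighbours W v; have := deg_leq_pred irrG v; rewrite ep; lia.
have vA : v \notin A by apply/negP => /(subsetP AW); rewrite !inE irrG andbF.
exists (v |: A); split.
- by rewrite subUset sub1set vW (subset_trans AW) ?subsetIl.
- apply: is_clique_setU1 => // a /(subsetP AW).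
  by rewrite !inE => /andP [].
- by rewrite cardsU1 vA.
Qed.

Lemma h_degseq_leq_omega : h ds <= omega G.
Proof.
have [|A [_ clA cardA]] := exists_clique_gcount (size (compl_seq ds)) (p := 0) (W := setT).
  by rewrite setCT cards0.
exact: leq_trans cardA (leq_card_omega clA).
Qed.

End GreedyClique.

Lemma leq_gcount (s t : seq nat) : size s = size t -> sorted leq s -> all2 leq t s ->
  forall fuel p q, q <= p -> gcount s fuel p <= gcount t fuel q.
Proof.
move=> st ss /(all2_nthP 0 _ (esym st)) ts; elim=> [//|fuel IH] p q qp /=.
rewrite -st; case: (ltnP p (size s)) => ps //; have qs := leq_ltn_trans qp ps.
rewrite qs ltnS; apply: IH.
have qt : q < size t by rewrite -st.
by have := ts q qt; have := leq_nth_sorted ss qp ps; lia.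
Qed.

Lemma h_monotone pi pi' : sorted leq pi -> size pi' = size pi ->
  all2 leq pi pi' -> h pi <= h pi'.
Proof.
move=> spi sz le_pi; rewrite /h /g !size_compl_seq sz.
apply: leq_gcount => //; rewrite ?size_compl_seq ?sorted_compl_seq //.
exact: all2_leq_compl_seq.
Qed.

(* [gblock s fuel p j] is the index of the step of the walk counted by
   [gcount s fuel p] whose interval [p_i, p_i + s_(p_i)] contains position j. *)
Fixpoint gblock (s : seq nat) (fuel p j : nat) : nat :=
  match fuel with
  | 0 => 0
  | fuel'.+1 =>
      if p < size s then
        if j <= p + nth 0 s p then 0 else (gblock s fuel' (p + nth 0 s p).+1 j).+1
      else 0
  end.

Section Blocks.

Variable s : seq nat.

Lemma gblock_lt_gcount fuel p j : size s <= p + fuel -> p <= j < size s ->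
  gblock s fuel p j < gcount s fuel p.
Proof.
elim: fuel p => [|fuel IH] p /= fuel_p jp; first lia.
case: (ltnP p (size s)) => ps; last lia.
by case: (leqP j (p + nth 0 s p)) => // lt_j; rewrite ltnS IH //; lia.
Qed.

Lemma gblock_surj fuel p c : size s <= p + fuel -> c < gcount s fuel p ->
  exists2 j, p <= j < size s & gblock s fuel p j = c.
Proof.
elim: fuel p c => [|fuel IH] p c /= fuel_p //.
case: (ltnP p (size s)) => ps //; case: c => [_|c].
  by exists p; rewrite ?leq_addr //; apply/andP.
rewrite ltnS => /IH [|j jp <-]; first lia.
by exists j; [lia | rewrite leqNgt; case/andP: jp => -> _].
Qed.

Lemma gblock_interval fuel p j : size s <= p + fuel -> p <= j < size s ->
  exists2 q, q <= j & forall j', p <= j' < size s ->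
    gblock s fuel p j' = gblock s fuel p j -> q <= j' <= q + nth 0 s q.
Proof.
elim: fuel p j => [|fuel IH] p j /= fuel_p jp; first lia.
case: (ltnP p (size s)) => ps; last lia.
case: (leqP j (p + nth 0 s p)) => jq.
  by exists p => [|j' j'p]; [lia | case: leqP => // _; lia].
have [||q qj Hq] := IH (p + nth 0 s p).+1 j; [lia | lia |].
by exists q => // j' j'p; case: leqP => // lt_j' [] /Hq; apply; lia.
Qed.

End Blocks.

Section BlockGraph.

Variable pi : seq nat.
Hypothesis pi_sorted : sorted leq pi.
Hypothesis pi_bounded : forall i, nth 0 pi i <= (size pi).-1.

Local Notation n := (size pi).
Local Notation e := (compl_seq pi).

Lemma h_compl_seq : h pi = gcount e n 0.
Proof. by rewrite /h /g size_compl_seq. Qed.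

(* Vertex x sits at position n-1-x of the complementary sequence. *)
Lemma block_lt (x : 'I_n) : gblock e n 0 (n.-1 - x) < h pi.
Proof.
rewrite h_compl_seq; apply: gblock_lt_gcount; rewrite size_compl_seq //.
by have := ltn_ord x; lia.
Qed.

Definition block (x : 'I_n) : 'I_(h pi) := Ordinal (block_lt x).

Definition block_graph : rel 'I_n := fun x y => block x != block y.

Lemma block_graph_simple : simple_graph block_graph.
Proof. by split=> [x | x y]; rewrite /block_graph ?eqxx // eq_sym. Qed.

Lemma block_graph_multipartite : complete_multipartite block_graph (h pi).
Proof.
exists block; split=> // c.
have [||j jn bj] := @gblock_surj e n 0 c; rewrite ?size_compl_seq -?h_compl_seq //.
rewrite size_compl_seq in jn; have xn : n.-1 - j < n by lia.
by exists (Ordinal xn); apply: val_inj; rewrite /= -bj; congr gblock; lia.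
Qed.

Lemma card_block_class (x : 'I_n) : exists2 q, q <= n.-1 - x &
  #|[set y | block x == block y]| <= (nth 0 e q).+1.
Proof.
have [||q qx same_q] := @gblock_interval e n 0 (n.-1 - x);
  rewrite ?size_compl_seq //; first by have := ltn_ord x; lia.
exists q => //; apply: (card_leq_interval (lo := n.-1 - q - nth 0 e q)) => y.
rewrite inE => /eqP /(congr1 val) /= bxy.
have yn := ltn_ord y; have yin : 0 <= n.-1 - y < size e by rewrite size_compl_seq; lia.
by have := same_q _ yin; rewrite bxy => /(_ erefl); lia.
Qed.

Lemma leq_deg_block_graph (x : 'I_n) : nth 0 pi x <= deg block_graph x.
Proof.
have xn := ltn_ord x; have [q qx card_class] := card_block_class x.
have deg_x : deg block_graph x = n - #|[set y | block x == block y]|.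
  rewrite /deg; have -> : [set y | block_graph x y] = ~: [set y | block x == block y].
    by apply/setP => y; rewrite !inE.
  by have := cardsC [set y | block x == block y]; rewrite card_ord; lia.
have e_mono : nth 0 e q <= nth 0 e (n.-1 - x).
  by rewrite leq_nth_sorted ?sorted_compl_seq ?size_compl_seq //; lia.
have e_x : nth 0 e (n.-1 - x) = n.-1 - nth 0 pi x.
  by rewrite nth_compl_seq; [congr (_ - nth 0 pi _) | ]; lia.
by have := pi_bounded x; rewrite deg_x; lia.
Qed.

Lemma all2_leq_degseq_block_graph : all2 leq pi (degseq block_graph).
Proof.
apply: all2_leq_sorted; rewrite ?sorted_degseq ?size_degseq // => c.
rewrite count_degseq -[pi in count _ pi](mkseq_nth 0 pi) /mkseq -val_enum_ord.
rewrite -map_comp count_map -card_set_count; apply: subset_leq_card.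
by apply/subsetP => x; rewrite !inE => /leq_trans; apply; exact: leq_deg_block_graph.
Qed.

Lemma exists_multipartite_dominating :
  exists pi' : seq nat,
    [/\ graphical pi', size pi' = size pi, all2 leq pi pi' &
    exists G : rel 'I_(size pi'),
      [/\ realizes G pi', complete_multipartite G (h pi),
          omega G = h pi & chi G = h pi]].
Proof.
have [omega_h chi_h] := omega_chi_complete_multipartite block_graph_multipartite.
have realized : realizes block_graph (degseq block_graph) by split; first exact: block_graph_simple.
exists (degseq block_graph); rewrite /graphical size_degseq.
by split=> //; [exists block_graph | exact: all2_leq_degseq_block_graph |
  exists block_graph; split=> //; exact: block_graph_multipartite].
Qed.

End BlockGraph.

Theorem mainTheorem9 (pi : seq nat) :
  graphical pi ->
  (* (i) *)
  (forall G : rel 'I_(size pi), realizes G pi ->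
     h pi <= omega G <= chi G) /\
  (* (ii) *)
  (forall pi' : seq nat, graphical pi' -> size pi' = size pi ->
     all2 leq pi pi' -> h pi <= h pi') /\
  (* (iii) *)
  (exists pi' : seq nat,
     [/\ graphical pi', size pi' = size pi, all2 leq pi pi' &
     exists G : rel 'I_(size pi'),
       [/\ realizes G pi', complete_multipartite G (h pi),
           omega G = h pi & chi G = h pi]]).
Proof.
case=> G0 [[irrG0 _] degseq_G0].
have pi_sorted : sorted leq pi by rewrite -degseq_G0; exact: sorted_degseq.
have pi_bounded i : nth 0 pi i <= (size pi).-1.
  by rewrite -[pi in nth _ pi]degseq_G0; exact: nth_degseq_leq.
split; [|split].
- move=> G [G_simple degseq_G]; rewrite omega_leq_chi andbT -[pi in h pi]degseq_G.
  exact: h_degseq_leq_omega.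
- by move=> pi' _; exact: h_monotone.
- exact: exists_multipartite_dominating.
Qed.
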